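(* Let $q$ be a prime power, $1\le k<n\le m$, let $g_1,\dots,g_n\in\mathbb{F}_{q^m}$ be linearly independent over $\mathbb{F}_q$, and let $\mathcal{G}$ be the Gabidulin code of dimension $k$ with respect to $g_1,\dots,g_n$. Then for every $f\in\mathcal{L}_q(x,\mathbb{F}_{q^m})$ with $\deg_q(f)=k$, the word $\sigma_f=(f(g_1),\dots,f(g_n))$ is a deep hole of $\mathcal{G}$ in the rank metric, i.e. $d_R(\sigma_f,\mathcal{G})=n-k$, which equals the covering radius of $\mathcal{G}$. Consequently $\mathcal{G}$ has at least $(q^m-1)q^{mk}$ deep holes in the rank metric.
   Context: A $q$-linearized polynomial over $\mathbb{F}_{q^m}$ is a polynomial $L(x)=\sum_{i=0}^{d}a_ix^{q^i}$ with $a_i\in\mathbb{F}_{q^m}$; if $a_d\ne0$, $d$ is its $q$-degree $\deg_q(L)$. $\mathcal{L}_q(x,\mathbb{F}_{q^m})$ is the set of these. Rank weight: for $\mathbf{u}=(u_1,\dots,u_n)\in\mathbb{F}_{q^m}^n$, $w_R(\mathbf{u})=\dim_{\mathbb{F}_q}\langle u_1,\dots,u_n\rangle$ (the rank of the matrix of coordinates of the $u_j$ in an $\mathbb{F}_q$-basis of $\mathbb{F}_{q^m}$); $d_R(\mathbf{u},\mathbf{v})=w_R(\mathbf{u}-\mathbf{v})$, $d_R(\mathbf{u},C)=\min_{\mathbf{c}\in C}d_R(\mathbf{u},\mathbf{c})$. The covering radius of $C$ is $\max_{\mathbf{u}\in\mathbb{F}_{q^m}^n}d_R(\mathbf{u},C)$,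 and a deep hole is a word attaining it. The Gabidulin code of dimension $k$ with respect to $\mathbb{F}_q$-linearly independent $g_1,\dots,g_n$ is $\mathcal{G}=\{(v(g_1),\dots,v(g_n)) : v\in\mathcal{L}_q(x,\mathbb{F}_{q^m}),\ v=0\text{ or }\deg_q(v)<k\}$; its covering radius in the rank metric is known to be $n-k$. *)

From HB Require Import structures.
From mathcomp Require Import all_boot all_order all_algebra all_field.
Set Implicit Arguments. Unset Strict Implicit. Unset Printing Implicit Defensive.
Import GRing.Theory.
Local Open Scope ring_scope.

Section Gabidulin.
Variables (F : finFieldType) (L : fieldExtType F).

(* A q-linearized polynomial sum_i a_i x^(q^i) is represented by the
   ordinary polynomial p with coefficients p`_i = a_i; its q-degree is
   (size p).-1, and it is zero iff p = 0. *)
Definition lin_eval (q : nat) (p : {poly L}) (x : L) : L :=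
  \sum_(i < size p) p`_i * x ^+ (q ^ i).

Definition rank_weight (n : nat) (u : n.-tuple L) : nat := \dim <<(u : seq L)>>%VS.

Definition rank_dist (n : nat) (u v : n.-tuple L) : nat :=
  rank_weight [tuple tnth u i - tnth v i | i < n].

Definition eval_word (q n : nat) (g : n.-tuple L) (p : {poly L}) : n.-tuple L :=
  [tuple lin_eval q p (tnth g i) | i < n].

(* Gabidulin code of dimension k w.r.t. g: evaluations of linearized
   polynomials v with v = 0 or deg_q v < k, i.e. size v <= k. *)
Definition in_gabidulin (q n k : nat) (g : n.-tuple L) (c : n.-tuple L) : Prop :=
  exists v : {poly L}, (size v <= k)%N /\ c = eval_word q g v.

Definition is_dist_to_code (n : nat) (C : n.-tuple L -> Prop) (u : n.-tuple L)
    (d : nat) : Prop :=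
  (exists c, C c /\ rank_dist u c = d) /\ (forall c, C c -> (d <= rank_dist u c)%N).

Definition is_covering_radius (n : nat) (C : n.-tuple L -> Prop) (r : nat) : Prop :=
  (exists u, is_dist_to_code C u r) /\
  (forall u d, is_dist_to_code C u d -> (d <= r)%N).

Definition deep_hole (n : nat) (C : n.-tuple L -> Prop) (u : n.-tuple L) : Prop :=
  exists r, is_covering_radius C r /\ is_dist_to_code C u r.

End Gabidulin.

(* Evaluating a linearized polynomial h of q-degree d is an F-linear map on L
   whose zero set is a subspace with at most q^d elements, since it consists of
   roots of an ordinary polynomial of degree q^d; so its kernel on <<g>> has
   dimension at most d.  For f of q-degree k and v of q-degree < k, rank-nullity
   then gives rank weight at least n - k to the evaluation word of f - v.
   Conversely, evaluation at k independent points is injective, hence bijective,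
   on polynomials of q-degree < k, so every word u agrees with some codeword on
   its first k coordinates and lies at rank distance at most n - k from the code.
   Distinct f of q-degree k give distinct words, and there are (q^m - 1) q^(mk)
   of them. *)

From HB Require Import structures.
From mathcomp Require Import all_boot all_order all_algebra all_field all_fingroup all_solvable.
From mathcomp Require Import zify.
Set Implicit Arguments. Unset Strict Implicit. Unset Printing Implicit Defensive.
Import GRing.Theory.
Local Open Scope ring_scope.

Section LinearizedPolynomial.
Variables (F : finFieldType) (L : fieldExtType F).
Local Notation q := #|F|.
Implicit Types (p v : {poly L}) (x y : L).

Lemma pnat_card_exp i : [pchar L].-nat (q ^ i)%N.
Proof.
have [r r_prime rF] := finPcharP F.
have rL : r \in [pchar L] by rewrite pchar_lalg.
have := abelem_pgroup (fin_ring_pchar_abelem rF); rewrite /pgroup cardsT.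
by rewrite pnatX (eq_pnat _ (pcharf_eq rL)) => ->.
Qed.

Lemma expr_cardD i x y : (x + y) ^+ (q ^ i) = x ^+ (q ^ i) + y ^+ (q ^ i).
Proof. exact: exprDn_pchar (pnat_card_exp i). Qed.

Lemma expr_cardZ i (c : F) x : (c *: x) ^+ (q ^ i) = c *: x ^+ (q ^ i).
Proof.
rewrite exprZn; congr (_ *: _).
by elim: i => [|i IHi]; rewrite ?expr1 // expnSr exprM IHi expf_card.
Qed.

Lemma lin_eval_widen p N x : (size p <= N)%N ->
  lin_eval q p x = \sum_(i < N) p`_i * x ^+ (q ^ i).
Proof.
move=> le_pN; rewrite /lin_eval (big_ord_widen N (fun i => p`_i * x ^+ (q ^ i))) //.
rewrite big_mkcond; apply: eq_bigr => i _; case: ltnP => // /(nth_default 0) ->.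
by rewrite mul0r.
Qed.

Lemma lin_evalB p v x : lin_eval q (p - v) x = lin_eval q p x - lin_eval q v x.
Proof.
set N := maxn (size p) (size v).
have le_pv : (size (p - v)%R <= N)%N.
  by apply: leq_trans (size_polyD _ _) _; rewrite size_polyN.
rewrite !(lin_eval_widen (N := N)) ?leq_maxl ?leq_maxr //.
by rewrite -sumrB; apply: eq_bigr => i _; rewrite coefB mulrBl.
Qed.

Lemma lin_eval_is_semilinear p : semilinear (lin_eval q p).
Proof.
split=> [c x | x y]; rewrite /lin_eval ?scaler_sumr -?big_split; apply: eq_bigr => i _.
  by rewrite expr_cardZ scalerAr.
by rewrite expr_cardD mulrDr.
Qed.

Definition lin_map p : L -> L := lin_eval q p.

HB.instance Definition _ p :=
  GRing.isSemilinear.Build F L L _ (lin_map p) (lin_eval_is_semilinear p).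

Definition lin_lfun p : 'End(L) := linfun (lin_map p).

Lemma lin_lfunE p x : lin_lfun p x = lin_eval q p x.
Proof. by rewrite lfunE. Qed.

Definition lin_poly p : {poly L} := \sum_(i < size p) p`_i *: 'X^(q ^ i).

Lemma horner_lin_poly p x : (lin_poly p).[x] = lin_eval q p x.
Proof. by rewrite horner_sum; apply: eq_bigr => i _; rewrite hornerZ hornerXn. Qed.

Lemma coef_lin_poly_exp p i : (i < size p)%N -> (lin_poly p)`_(q ^ i) = p`_i.
Proof.
move=> lt_ip; rewrite coef_sum (bigD1 (Ordinal lt_ip)) //= coefZ coefXn eqxx mulr1.
rewrite big1 ?addr0 // => j; rewrite -val_eqE /= => /negPf neq_ji.
by rewrite coefZ coefXn eqn_exp2l ?finNzRing_gt1 // eq_sym neq_ji mulr0.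
Qed.

Lemma size_lin_poly_le p : (size (lin_poly p) <= (q ^ (size p).-1).+1)%N.
Proof.
apply: leq_trans (size_sum _ _ _) _; apply/bigmax_leqP => i _.
apply: leq_trans (size_scale_leq _ _) _.
rewrite size_polyXn ltnS leq_exp2l ?finNzRing_gt1 //.
by rewrite -ltnS prednK // (leq_ltn_trans _ (ltn_ord i)).
Qed.

Lemma lin_poly_eq0 p : (lin_poly p == 0) = (p == 0).
Proof.
apply/eqP/eqP => [p0 | ->]; last by rewrite /lin_poly size_poly0 big_ord0.
apply/eqP; rewrite -lead_coef_eq0 lead_coefE.
case: (posnP (size p)) => [sp0 | sp_gt0]; first by rewrite nth_default // sp0.
by rewrite -coef_lin_poly_exp ?prednK // p0 coef0.
Qed.

Lemma dim_le_lin_eval_vanish p (V : {vspace L}) : p != 0 ->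
  {in V, forall x, lin_eval q p x = 0} -> (\dim V <= (size p).-1)%N.
Proof.
move=> p_neq0 pV0; pose T := finvect_type L.
have P_neq0 : lin_poly p != 0 by rewrite lin_poly_eq0.
have rootsV : all (root (lin_poly p)) (enum (V : {vspace T})).
  apply/allP => x; rewrite (@mem_enum T) => Vx.
  by rewrite rootE horner_lin_poly pV0.
have size_V : size (enum (V : {vspace T})) = (q ^ \dim V)%N.
  by rewrite -cardE card_vspace.
have := max_poly_roots P_neq0 rootsV (enum_uniq _).
rewrite size_V => /leq_trans/(_ (size_lin_poly_le p)).
by rewrite ltnS leq_exp2l ?finNzRing_gt1.
Qed.

Lemma lin_eval_span_vanish p (s : seq L) :
  {in s, forall x, lin_eval q p x = 0} -> {in <<s>>%VS, forall x, lin_eval q p x = 0}.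
Proof.
move=> ps0 x; suff /subvP sub_ker : (<<s>> <= lker (lin_lfun p))%VS.
  by move/sub_ker; rewrite memv_ker lin_lfunE => /eqP.
by apply/span_subvP => y /ps0 py0; rewrite memv_ker lin_lfunE py0.
Qed.

Lemma lin_eval_free_vanish p (s : seq L) : free s -> (size p <= size s)%N ->
  {in s, forall x, lin_eval q p x = 0} -> p = 0.
Proof.
move=> free_s le_ps ps0; apply: contraTeq le_ps => p_neq0; rewrite -ltnNge.
have := dim_le_lin_eval_vanish p_neq0 (lin_eval_span_vanish ps0).
by move/eqP: free_s => ->; rewrite -ltnS prednK // size_poly_gt0.
Qed.

Lemma lin_interpolation (s : seq L) (w : nat -> L) : free s ->
  exists2 v : {poly L}, (size v <= size s)%N &
    forall j, (j < size s)%N -> lin_eval q v s`_j = w j.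
Proof.
move=> free_s; set k := size s.
pose M : 'M[L]_k := \matrix_(i, j) s`_j ^+ (q ^ i).
have evalM (a : 'rV[L]_k) (j : 'I_k) : lin_eval q (rVpoly a) s`_j = (a *m M) 0 j.
  rewrite (lin_eval_widen (N := k)) ?size_poly // !mxE; apply: eq_bigr => i _.
  by rewrite coef_rVpoly_ord mxE.
have M_unit : M \in unitmx.
  rewrite -row_free_unit; apply: inj_row_free => a aM0.
  apply: (can_inj (@rVpolyK _ _)); rewrite linear0.
  apply: lin_eval_free_vanish free_s (size_poly _ _) _ => _ /(nthP 0) [j lt_jk <-].
  by rewrite (evalM a (Ordinal lt_jk)) aM0 mxE.
exists (rVpoly ((\row_j w j) *m invmx M)); first exact: size_poly.
by move=> j lt_jk; rewrite (evalM _ (Ordinal lt_jk)) mulmxKV // mxE.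
Qed.

End LinearizedPolynomial.

Lemma free_take (K : fieldType) (vT : vectType K) (s : seq vT) k :
  free s -> free (take k s).
Proof. by rewrite -{1}(cat_take_drop k s) => /catl_free. Qed.

Lemma dim_span_zero_prefix (K : fieldType) (vT : vectType K) (s : seq vT) k :
  (forall j, (j < k)%N -> s`_j = 0) -> (\dim <<s>> <= size s - k)%N.
Proof.
move=> s0; rewrite -size_drop; apply: leq_trans (dim_span _).
apply/dimvS/span_subvP => _ /(nthP 0) [j lt_js <-].
case: (ltnP j k) => [/s0 -> | le_kj]; first exact: mem0v.
apply: memv_span; rewrite -(subnKC le_kj) -nth_drop mem_nth //.
by rewrite size_drop ltn_sub2r // (leq_ltn_trans le_kj lt_js).
Qed.

Section EvaluationWords.
Variables (F : finFieldType) (L : fieldExtType F) (n : nat) (g : n.-tuple L).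
Hypothesis free_g : free g.
Local Notation q := #|F|.
Local Notation ev := (eval_word q g).

Lemma rank_dist_eval_word (f v : {poly L}) :
  rank_dist (ev f) (ev v) = rank_weight (ev (f - v)).
Proof.
by congr rank_weight; apply: eq_from_tnth => i; rewrite !tnth_mktuple lin_evalB.
Qed.

Lemma rank_weight_eval_word (h : {poly L}) :
  (\dim (<<g>> :&: lker (lin_lfun h)) + rank_weight (ev h))%N = n.
Proof.
have -> : ev h = map_tuple (lin_lfun h) g.
  by apply: eq_from_tnth => i; rewrite tnth_mktuple tnth_map lin_lfunE.
rewrite /rank_weight /= -limg_span limg_ker_dim.
by move/eqP: free_g ->; rewrite size_tuple.
Qed.

Lemma rank_weight_eval_word_ge (h : {poly L}) : h != 0 ->
  (n - (size h).-1 <= rank_weight (ev h))%N.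
Proof.
move=> h_neq0; have := rank_weight_eval_word h.
have : (\dim (<<g>> :&: lker (lin_lfun h)) <= (size h).-1)%N.
  apply: dim_le_lin_eval_vanish h_neq0 _ => x.
  by rewrite memv_cap memv_ker lin_lfunE => /andP[_ /eqP].
lia.
Qed.

Lemma rank_dist_eval_word_ge k (f v : {poly L}) : size f = k.+1 -> (size v <= k)%N ->
  (n - k <= rank_dist (ev f) (ev v))%N.
Proof.
move=> size_f le_vk; have size_fv : size (f - v) = k.+1.
  by rewrite size_polyDl ?size_polyN ?size_f.
have fv_neq0 : f - v != 0 by rewrite -size_poly_eq0 size_fv.
by have := rank_weight_eval_word_ge fv_neq0; rewrite size_fv rank_dist_eval_word.
Qed.

Lemma rank_dist_gabidulin_le k (u : n.-tuple L) : (k <= n)%N ->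
  exists2 v : {poly L}, (size v <= k)%N & (rank_dist u (ev v) <= n - k)%N.
Proof.
move=> le_kn; have size_gk : size (take k g) = k by rewrite size_takel ?size_tuple.
have [v le_vk uv] := lin_interpolation (fun j => u`_j) (free_take k free_g).
rewrite size_gk in le_vk uv; exists v => //.
rewrite /rank_dist /rank_weight; set w := [tuple _ | i < n].
suff w0 : forall j, (j < k)%N -> (w : seq L)`_j = 0.
  by have := dim_span_zero_prefix w0; rewrite size_tuple.
move=> j lt_jk; have lt_jn := leq_trans lt_jk le_kn.
rewrite -(tnth_nth 0 _ (Ordinal lt_jn)) !tnth_mktuple (tnth_nth 0) (tnth_nth 0) /=.
by rewrite -uv // nth_take // subrr.
Qed.

Lemma eval_word_inj (f1 f2 : {poly L}) : (size f1 <= n)%N -> (size f2 <= n)%N ->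
  ev f1 = ev f2 -> f1 = f2.
Proof.
move=> le_f1 le_f2 ev12; apply/eqP; rewrite -subr_eq0; apply/eqP.
apply: lin_eval_free_vanish free_g _ _.
  by rewrite size_tuple (leq_trans (size_polyD _ _)) // size_polyN geq_max le_f1.
move=> x /(nthP 0) [j]; rewrite size_tuple => lt_jn <-.
have := congr1 (fun w => tnth w (Ordinal lt_jn)) ev12.
by rewrite /= !tnth_mktuple (tnth_nth 0) lin_evalB => ->; rewrite subrr.
Qed.

End EvaluationWords.

Section GabidulinCode.
Variables (F : finFieldType) (L : fieldExtType F) (n k : nat) (g : n.-tuple L).
Hypotheses (free_g : free g) (le_kn : (k <= n)%N).
Local Notation q := #|F|.
Local Notation ev := (eval_word q g).
Local Notation code := (in_gabidulin q k g).

Lemma gabidulin_dist_eval_word (f : {poly L}) : size f = k.+1 ->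
  is_dist_to_code code (ev f) (n - k).
Proof.
move=> size_f; split=> [|_ [v [le_vk ->]]]; last exact: rank_dist_eval_word_ge.
have [v le_vk le_dist] := rank_dist_gabidulin_le free_g (ev f) le_kn.
exists (ev v); split; first by exists v.
by apply/eqP; rewrite eqn_leq le_dist rank_dist_eval_word_ge.
Qed.

Lemma gabidulin_covering_radius : is_covering_radius code (n - k).
Proof.
split=> [|u d [_ min_d]].
  by exists (ev 'X^k); apply: gabidulin_dist_eval_word; rewrite size_polyXn.
have [v le_vk le_dist] := rank_dist_gabidulin_le free_g u le_kn.
by apply: leq_trans le_dist; apply: min_d; exists v.
Qed.

Lemma deep_hole_eval_word (f : {poly L}) : size f = k.+1 -> deep_hole code (ev f).
Proof.
move=> size_f; exists (n - k)%N.
by split; [exact: gabidulin_covering_radius | exact: gabidulin_dist_eval_word].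
Qed.

End GabidulinCode.

Section PolynomialsOfSize.
Variables (F : finFieldType) (L : fieldExtType F) (k : nat).
Local Notation T := (finvect_type L).

Definition poly_lead_tail (x : T * 'rV[T]_k) : {poly L} :=
  x.1 *: 'X^k + rVpoly (x.2 : 'rV[L]_k).

Definition polys_of_size : seq {poly L} :=
  map poly_lead_tail (enum [set x : T * 'rV[T]_k | x.1 != 0]).

Lemma mem_polys_of_size p : p \in polys_of_size -> size p = k.+1.
Proof.
case/mapP => x; rewrite mem_enum inE => x1_neq0 ->.
by rewrite size_polyDl size_scale // size_polyXn // ltnS size_poly.
Qed.

Lemma poly_lead_tail_inj : injective poly_lead_tail.
Proof.
have coef_lead x : (poly_lead_tail x)`_k = x.1.
  by rewrite coefD coefZ coefXn eqxx mulr1 coef_rVpoly insubF ?ltnn ?addr0.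
have coef_tail x (i : 'I_k) : (poly_lead_tail x)`_i = x.2 0 i.
  by rewrite coefD coefZ coefXn (ltn_eqF (ltn_ord i)) mulr0 add0r coef_rVpoly_ord.
move=> [a b] [a' b'] eq_ab; congr pair.
  by have := coef_lead (a, b); rewrite eq_ab coef_lead.
by apply/rowP => i; have := coef_tail (a, b) i; rewrite eq_ab coef_tail.
Qed.

Lemma polys_of_size_uniq : uniq polys_of_size.
Proof. by rewrite map_inj_uniq ?enum_uniq //; exact: poly_lead_tail_inj. Qed.

Lemma size_polys_of_size :
  size polys_of_size = ((#|F| ^ \dim {:L} - 1) * #|F| ^ (\dim {:L} * k))%N.
Proof.
have card_T : #|T| = (#|F| ^ \dim {:L})%N.
  by rewrite -(@card_vspace F T _ fullv) (@card_vspacef F T _).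
rewrite size_map -cardE.
have -> : [set x : T * 'rV[T]_k | x.1 != 0] = setX [set~ 0] setT.
  by apply/setP => x; rewrite !inE andbT.
by rewrite cardsX cardsC1 cardsT card_mx mul1n card_T subn1 expnM.
Qed.

End PolynomialsOfSize.

Theorem corollary1 (F : finFieldType) (L : fieldExtType F) (q m n k : nat)
  (hq : #|F| = q) (hm : \dim {:L} = m)
  (hk : (1 <= k)%N) (hkn : (k < n)%N) (hnm : (n <= m)%N)
  (g : n.-tuple L) (hg : free (g : seq L)) :
  (forall f : {poly L}, size f = k.+1 ->
     is_dist_to_code (in_gabidulin q k g) (eval_word q g f) (n - k) /\
     is_covering_radius (in_gabidulin q k g) (n - k) /\
     deep_hole (in_gabidulin q k g) (eval_word q g f)) /\
  (exists s : seq (n.-tuple L),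
     [/\ uniq s, ((q ^ m - 1) * q ^ (m * k) <= size s)%N &
         forall u, u \in s -> deep_hole (in_gabidulin q k g) u]).
Proof.
subst q m; have le_kn := ltnW hkn; split=> [f size_f|].
  split; first exact: gabidulin_dist_eval_word.
  by split; [exact: gabidulin_covering_radius | exact: deep_hole_eval_word].
exists [seq eval_word #|F| g p | p <- polys_of_size L k]; split.
- rewrite map_inj_in_uniq ?polys_of_size_uniq // => p1 p2.
  move=> /mem_polys_of_size size_p1 /mem_polys_of_size size_p2.
  by apply: eval_word_inj; rewrite ?size_p1 ?size_p2.
- by rewrite size_map size_polys_of_size.
- by move=> _ /mapP [p /mem_polys_of_size size_p ->]; apply: deep_hole_eval_word.
Qed.
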